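(* Let $X=X_1\cdots X_n$ be uniformly distributed on $\{0,1\}^n$ (i.e. $X_i$ i.i.d. $\mathrm{Bernoulli}(1/2)$), and let $Y^1,\dots,Y^t$ be the outputs of $t$ independent deletion channels with deletion probability $\delta$ on input $X$. Let $y^1,\dots,y^t$ be observed traces with $\Pr(Y^1=y^1,\dots,Y^t=y^t)>0$, and write $I(w)=\langle y^1\uparrow\cdots\uparrow y^t,w\rangle$. Then for every $i\in\{1,\dots,n\}$, $$\Pr(X_i=1\mid Y^1=y^1,\dots,Y^t=y^t)=\frac{\displaystyle\sum_{k=0}^n 2^{n-k-1}\binom{n-1}{k}\sum_{w\in\{0,1\}^k}I(w)+\sum_{k=0}^n\sum_{j=1}^k 2^{n-k}\binom{i-1}{j-1}\binom{n-i}{k-j}\sum_{\substack{w\in\{0,1\}^k\\ w_j=1}}I(w)}{\displaystyle\sum_{k=0}^n 2^{n-k}\binom{n}{k}\sum_{w\in\{0,1\}^k}I(w)}.$$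
   Context: The deletion channel with deletion probability $\delta$ deletes each input symbol independently with probability $\delta$ and outputs the subsequence of undeleted symbols; the $t$ channels act independently given $X$. Classical binomial coefficients satisfy $\binom{a}{b}=0$ whenever $b>a$ or $b<0$. Infiltration coefficient: for binary sequences $f_1,\dots,f_t$ and $w$, $\langle f_1\uparrow\cdots\uparrow f_t,w\rangle$ is the number of tuples $(S_1,\dots,S_t)$ of subsets of $\{1,\dots,|w|\}$ such that $|S_j|=|f_j|$, the subsequence of $w$ indexed by $S_j$ equals $f_j$ for each $j$, and $S_1\cup\cdots\cup S_t=\{1,\dots,|w|\}$ (i.e. the number of ways to obtain $w$ as a supersequence of $f_1,\dots,f_t$ in which every symbol of $w$ is covered by at least one $f_j$). *)

From mathcomp Require Import all_boot all_order all_algebra.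
Set Implicit Arguments. Unset Strict Implicit. Unset Printing Implicit Defensive.
Import Order.TTheory GRing.Theory Num.Theory.
Local Open Scope ring_scope.

(* Probability that a deletion channel with deletion probability [d] outputs
   [y] on input [x]: sum over all keep-patterns [m] (true = kept, prob 1-d;
   false = deleted, prob d) whose kept subsequence of [x] is [y]. *)
Definition del_prob (R : pzRingType) (d : R) (x y : seq bool) : R :=
  \sum_(m : (size x).-tuple bool | mask m x == y)
     \prod_(b <- m) (if b then 1 - d else d).

Definition joint_prob (R : unitRingType) (d : R) (n t : nat)
  (ys : 'I_t -> seq bool) (x : n.-tuple bool) : R :=
  (2 ^+ n)^-1 * \prod_(j < t) del_prob d x (ys j).

Definition traces_prob (R : unitRingType) (d : R) (n t : nat)
  (ys : 'I_t -> seq bool) : R :=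
  \sum_(x : n.-tuple bool) joint_prob d ys x.

(* Pr(X_i = 1, Y^1 = y^1, ..., Y^t = y^t)  (i is 0-based here) *)
Definition bit_traces_prob (R : unitRingType) (d : R) (n t : nat)
  (ys : 'I_t -> seq bool) (i : 'I_n) : R :=
  \sum_(x : n.-tuple bool | tnth x i) joint_prob d ys x.

Definition posterior (R : unitRingType) (d : R) (n t : nat)
  (ys : 'I_t -> seq bool) (i : 'I_n) : R :=
  bit_traces_prob d ys i / traces_prob d n ys.

Definition subseq_at (k : nat) (w : k.-tuple bool) (S : {set 'I_k}) : seq bool :=
  mask [seq i \in S | i <- enum 'I_k] w.

Definition infil (t : nat) (f : 'I_t -> seq bool) (k : nat) (w : k.-tuple bool) : nat :=
  #|[set F : {ffun 'I_t -> {set 'I_k}} |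
      [forall j, (#|F j| == size (f j)) && (subseq_at w (F j) == f j)]
      && (\bigcup_(j < t) F j == [set: 'I_k])]|.

From mathcomp Require Import all_boot all_order all_algebra.
From mathcomp Require Import zify ring.
Import Order.TTheory GRing.Theory Num.Theory.
Set Implicit Arguments. Unset Strict Implicit. Unset Printing Implicit Defensive.

(* A deletion channel turns x into y with probability
   wbinom x y * (1 - d)^|y| * d^(|x| - |y|), where wbinom x y counts the
   occurrences of y as a subsequence of x, so the common factors cancel from the
   posterior and it becomes a ratio of sums over x of \prod_j wbinom x (y^j).
   A t-tuple of occurrences of the traces in x amounts to the word w that x carries
   on the union of their supports, an occurrence of w in x, and a covering t-tuple
   of occurrences of the traces in w; hence
     \prod_j wbinom x (y^j) = \sum_w <y^1 ^ ... ^ y^t, w> * wbinom x w.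
   Summing over x then only needs the number of pairs (x, occurrence of w in x):
   choose the |w| positions and the n - |w| free bits; under x_i = 1, position i is
   either free or carries some letter w_j, which must then be 1, and Vandermonde's
   identity counts the positions on either side of i. *)

Section TupleBig.
Variables (R : Type) (idx : R) (op : Monoid.com_law idx) (T : finType).

Lemma big_tuple0 (F : 0.-tuple T -> R) :
  \big[op/idx]_(u : 0.-tuple T) F u = F [tuple].
Proof. by rewrite (big_pred1 [tuple]) // => u; apply/esym/eqP/tuple0. Qed.

Lemma big_tuple_cons n (F : n.+1.-tuple T -> R) :
  \big[op/idx]_(u : n.+1.-tuple T) F u =
  \big[op/idx]_(a : T) \big[op/idx]_(u : n.-tuple T) F [tuple of a :: u].
Proof.
rewrite pair_big (reindex (fun p : T * n.-tuple T => [tuple of p.1 :: p.2])) //.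
exists (fun u => (thead u, behead_tuple u)) => [[a u] _ | u _].
  by congr pair; apply: val_inj.
by rewrite [RHS]tuple_eta.
Qed.

Lemma big_tuple_cat m n (F : (m + n).-tuple T -> R) :
  \big[op/idx]_(u : (m + n).-tuple T) F u =
  \big[op/idx]_(p : m.-tuple T) \big[op/idx]_(s : n.-tuple T) F [tuple of p ++ s].
Proof.
elim: m F => [|m IH] F.
  by rewrite big_tuple0; apply: eq_bigr => s _; congr F; apply: val_inj.
rewrite big_tuple_cons big_tuple_cons; apply: eq_bigr => a _.
by rewrite IH; apply: eq_bigr => p _; apply: eq_bigr => s _; congr F; apply: val_inj.
Qed.

End TupleBig.

Section WordBinomial.
Variable T : eqType.

Fixpoint wbinom (x w : seq T) : nat :=
  if x is a :: x' then
    wbinom x' w + (if w is b :: w' then (a == b) * wbinom x' w' else 0)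
  else w == [::].

Lemma wbinom_small x w : size x < size w -> wbinom x w = 0.
Proof.
elim: x w => [|a x IH] [|b w] //= lt_xw.
by rewrite IH ?(ltn_trans _ lt_xw) // IH ?muln0.
Qed.

Lemma wbinom_mask x w :
  wbinom x w = #|[pred m : (size x).-tuple bool | mask m x == w]|.
Proof.
rewrite -sum1_card big_mkcond /=.
elim: x w => [|a x IH] w /=.
  by rewrite big_tuple0; case: w.
rewrite big_tuple_cons big_bool /= -!IH addnC; congr addn.
case: w => [|b w]; first by rewrite big1.
rewrite IH big_distrr /=; apply: eq_bigr => m _.
by rewrite !inE /= eqseq_cons; case: (a == b); case: (_ == _).
Qed.

Lemma wbinom_cat p s w :
  wbinom (p ++ s) w =
  \sum_(j < (size w).+1) wbinom p (take j w) * wbinom s (drop j w).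
Proof.
elim: p w => [|a p IH] w /=.
  rewrite big_ord_recl take0 drop0 mul1n big1 ?addn0 // => j _.
  by case: w j => [|b w] [j lt_j].
under eq_bigr do rewrite mulnDl.
rewrite big_split /= -IH; congr addn.
case: w => [|b w] /=; first by rewrite big_ord_recl big_ord0.
rewrite big_ord_recl /= add0n IH big_distrr /=.
by apply: eq_bigr => j _; rewrite mulnA.
Qed.

End WordBinomial.

Lemma bin_expn_mul q a b c e :
  'C(a, b) * q ^ (a - b) * ('C(c, e) * q ^ (c - e)) =
  'C(a, b) * 'C(c, e) * q ^ (a + c - (b + e)).
Proof.
have [lt_ab|le_ba] := ltnP a b; first by rewrite bin_small ?mul0n.
have [lt_ce|le_ec] := ltnP c e; first by rewrite (bin_small lt_ce) !mul0n !muln0.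
rewrite (_ : a + c - (b + e) = (a - b) + (c - e)); last by lia.
by rewrite expnD; ring.
Qed.

Section SumWordBinomial.
Variable T : finType.
Local Notation q := #|T|.

Lemma sum_wbinom n w :
  \sum_(x : n.-tuple T) wbinom x w = 'C(n, size w) * q ^ (n - size w).
Proof.
elim: n w => [|n IH] w; first by rewrite big_tuple0; case: w.
rewrite big_tuple_cons /=.
under eq_bigr do rewrite big_split /= IH.
rewrite big_split /= sum_nat_const; change #|_| with q.
case: w => [|b w] /=; first by rewrite !big1_eq !bin0 !subn0 expnS !mul1n addn0.
under eq_bigr do rewrite -big_distrr /= IH.
rewrite -big_distrl /= (bigD1 b) //= eqxx big1 => [|a /negbTE -> //].
rewrite binS subSS addn0 mul1n mulnDl; congr addn.
have [lt_wn|le_nw] := ltnP (size w) n; last by rewrite bin_small ?muln0 //; lia.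
by rewrite (_ : n - size w = (n - (size w).+1).+1) ?expnS; [ring|lia].
Qed.

Lemma sum_wbinom_cons m c v :
  \sum_(s : m.-tuple T) wbinom (c :: s) v =
  'C(m, size v) * q ^ (m - size v) +
  (if v is b :: v' then (c == b) * ('C(m, size v') * q ^ (m - size v')) else 0).
Proof.
rewrite big_split /= sum_wbinom; congr addn.
by case: v => [|b v]; rewrite ?big1_eq // -big_distrr /= sum_wbinom.
Qed.

Lemma sum_wbinom_nth i m c w (k := size w) :
  \sum_(x : (i + m.+1).-tuple T | nth c x i == c) wbinom x w =
  'C(i + m, k) * q ^ (i + m - k) +
  \sum_(j < k) (nth c w j == c) * ('C(i, j) * 'C(m, k - j.+1) * q ^ (i + m.+1 - k)).
Proof.
have pin_c (p : i.-tuple T) :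
    \sum_(s : m.+1.-tuple T) (if nth c (p ++ s) i == c then wbinom (p ++ s) w else 0) =
    \sum_(s : m.-tuple T) wbinom (p ++ c :: s) w.
  rewrite big_tuple_cons exchange_big; apply: eq_bigr => s _ /=.
  under eq_bigr do rewrite nth_cat size_tuple ltnn subnn.
  by rewrite -big_mkcond big_pred1_eq.
rewrite big_mkcond big_tuple_cat /=.
under eq_bigr do rewrite pin_c.
under eq_bigr do under eq_bigr do rewrite wbinom_cat.
under eq_bigr do rewrite exchange_big /=.
rewrite exchange_big /=.
under eq_bigr do under eq_bigr do rewrite -big_distrr.
under eq_bigr do rewrite -big_distrl.
(* With x = p ++ c :: s, an occurrence of w in x is one of take j w in p followed
   by one of drop j w in c :: s, which uses the pinned letter c iff it starts there. *)
have split_at (j : 'I_k.+1) :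
    (\sum_(p : i.-tuple T) wbinom p (take j w)) *
    (\sum_(s : m.-tuple T) wbinom (c :: s) (drop j w)) =
    'C(i, j) * 'C(m, k - j) * q ^ (i + m - k) +
    (j < k) * ((nth c w j == c) * ('C(i, j) * 'C(m, k - j.+1) * q ^ (i + m.+1 - k))).
  case: j => j /= le_jk.
  rewrite sum_wbinom size_takel // sum_wbinom_cons size_drop mulnDr bin_expn_mul subnKC //.
  congr addn; have [lt_jk|le_kj] := ltnP j k; last by rewrite drop_oversize // muln0 mul0n.
  rewrite (drop_nth c lt_jk) /= size_drop eq_sym mulnCA bin_expn_mul mul1n.
  by rewrite (_ : i + m - (j + (k - j.+1)) = i + m.+1 - k) //; lia.
rewrite (eq_bigr _ (fun j _ => split_at j)) big_split /=; congr addn.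
  by rewrite -big_distrl /= binomial.Vandermonde.
rewrite big_ord_recr /= ltnn mul0n addn0.
by apply: eq_bigr => j _; rewrite ltn_ord mul1n.
Qed.

Lemma sum_wbinom_tnth n (i : 'I_n) c w (k := size w) :
  \sum_(x : n.-tuple T | tnth x i == c) wbinom x w =
  'C(n.-1, k) * q ^ (n.-1 - k) +
  \sum_(j < k) (nth c w j == c) * ('C(i, j) * 'C(n - i.+1, k - j.+1) * q ^ (n - k)).
Proof.
under eq_bigl do rewrite (tnth_nth c).
case: i => i /= lt_in.
have n_split : n = i + (n - i.+1).+1 by lia.
move: (n - i.+1) n_split => m ->.
by rewrite sum_wbinom_nth addnS.
Qed.

End SumWordBinomial.

Lemma size_subseq_at k (w : k.-tuple bool) S : size (subseq_at w S) = #|S|.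
Proof.
rewrite /subseq_at size_mask; last by rewrite size_map size_enum_ord size_tuple.
by rewrite count_map -size_filter enumT cardE /enum_mem.
Qed.

Lemma subseq_at_cons k c (w : k.-tuple bool) (S : {set 'I_k.+1}) :
  subseq_at [tuple of c :: w] S =
  if ord0 \in S then c :: subseq_at w [set x | lift ord0 x \in S]
  else subseq_at w [set x | lift ord0 x \in S].
Proof.
rewrite /subseq_at enum_ordSl /= -map_comp.
have -> : [seq i \in [set x | lift ord0 x \in S] | i <- enum 'I_k] =
          [seq ((mem S) \o lift ord0) i | i <- enum 'I_k].
  by apply: eq_map => x; rewrite inE.
by case: (ord0 \in S).
Qed.

Lemma cover_ordS t k (F : 'I_t -> {set 'I_k.+1}) :
  (\bigcup_j F j == setT) =
  [exists j, ord0 \in F j] && (\bigcup_j [set x | lift ord0 x \in F j] == setT).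
Proof.
rewrite -!subTset; apply/subsetP/andP => [cover | [/existsP[j0 F0] /subsetP cover] x _].
  split; first by have /bigcupP[j _ Fj] := cover ord0 (in_setT _); apply/existsP; exists j.
  apply/subsetP => x _; have /bigcupP[j _ Fj] := cover (lift ord0 x) (in_setT _).
  by apply/bigcupP; exists j; rewrite ?inE.
apply/bigcupP; case: (unliftP ord0 x) => [y ->|->]; last by exists j0.
by have /bigcupP[j _] := cover y (in_setT _); rewrite inE; exists j.
Qed.

Section Infiltration.
Variable t : nat.
Implicit Types (ys : 'I_t -> seq bool) (f : {ffun 'I_t -> bool}).

Definition peel ys f j : seq bool := if f j then behead (ys j) else ys j.

Definition infil_cover ys k (w : k.-tuple bool) (F : {ffun 'I_t -> {set 'I_k}}) :=
  [forall j, subseq_at w (F j) == ys j] && (\bigcup_j F j == [set: 'I_k]).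

Lemma infilE ys k (w : k.-tuple bool) : infil ys w = \sum_F infil_cover ys w F.
Proof.
rewrite /infil -sum1_card big_mkcond /=; apply: eq_bigr => F _; rewrite inE.
congr (nat_of_bool (_ && _)); apply: eq_forallb => j.
by case: (subseq_at w (F j) =P ys j) => [<-|]; rewrite ?andbF // size_subseq_at eqxx.
Qed.

Lemma infil_nil ys (w : 0.-tuple bool) : infil ys w = [forall j, ys j == [::]].
Proof.
rewrite infilE (big_pred1 [ffun=> set0]) => [|F /=]; last first.
  by apply/esym/eqP/ffunP => j; rewrite ffunE; apply/setP => -[].
rewrite /infil_cover.
have -> : \bigcup_(j < t) [ffun=> set0 : {set 'I_0}] j == setT by apply/eqP/setP => -[].
rewrite andbT; congr nat_of_bool; apply: eq_forallb => j.
by rewrite ffunE [w]tuple0 /subseq_at eq_sym; case: (enum 'I_0).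
Qed.

Definition cons_cover k (fG : {ffun 'I_t -> bool} * {ffun 'I_t -> {set 'I_k}}) :
    {ffun 'I_t -> {set 'I_k.+1}} :=
  [ffun j => (if fG.1 j then [set ord0] else set0) :|: lift ord0 @: fG.2 j].

Lemma mem0_cons_cover k fG j : (ord0 \in @cons_cover k fG j) = fG.1 j.
Proof.
rewrite ffunE in_setU (negbTE (introN imsetP _)) ?orbF => [|[x _ /eqP]].
  by case: (fG.1 j); rewrite inE.
by rewrite (negbTE (neq_lift _ _)).
Qed.

Lemma memS_cons_cover k fG j x : (lift ord0 x \in @cons_cover k fG j) = (x \in fG.2 j).
Proof.
rewrite ffunE in_setU mem_imset ?orbT; last exact: lift_inj.
by case: (fG.1 j); rewrite ?inE.
Qed.

Lemma cons_cover_bij k : bijective (@cons_cover k).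
Proof.
exists (fun F : {ffun 'I_t -> {set 'I_k.+1}} =>
  ([ffun j => ord0 \in F j], [ffun j => [set x | lift ord0 x \in F j]])
  : {ffun 'I_t -> bool} * {ffun 'I_t -> {set 'I_k}}).
  move=> [f G]; congr pair; apply/ffunP => j; rewrite ffunE ?mem0_cons_cover //.
  by apply/setP => x; rewrite inE memS_cons_cover.
move=> F; apply/ffunP => j; apply/setP => x.
case: (unliftP ord0 x) => [y ->|->]; first by rewrite memS_cons_cover ffunE inE.
by rewrite mem0_cons_cover ffunE.
Qed.

Lemma infil_cover_cons ys k c (w : k.-tuple bool) f G :
  infil_cover ys [tuple of c :: w] (cons_cover (f, G)) =
  ([exists j, f j] && [forall j, f j ==> (ohead (ys j) == Some c)]) &&
  infil_cover (peel ys f) w G.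
Proof.
have G_lift j : [set x | lift ord0 x \in cons_cover (f, G) j] = G j.
  by apply/setP => x; rewrite inE memS_cons_cover.
rewrite /infil_cover cover_ordS.
under eq_existsb do rewrite mem0_cons_cover.
under eq_bigr do rewrite G_lift.
have -> : [forall j, subseq_at [tuple of c :: w] (cons_cover (f, G) j) == ys j] =
    [forall j, f j ==> (ohead (ys j) == Some c)] &&
    [forall j, subseq_at w (G j) == peel ys f j].
  rewrite -!(big_andE xpredT) -big_split; apply: eq_bigr => j _ /=.
  rewrite subseq_at_cons mem0_cons_cover G_lift /peel.
  by case: (f j) (ys j) => [] [|b y] //=; case: b; case: c.
by rewrite /= -!andbA; case: [exists _, _]; rewrite ?andbF.
Qed.

Lemma infil_cons ys k c (w : k.-tuple bool) :
  infil ys [tuple of c :: w] =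
  \sum_(f : {ffun 'I_t -> bool} |
          [exists j, f j] && [forall j, f j ==> (ohead (ys j) == Some c)])
     infil (peel ys f) w.
Proof.
rewrite infilE (reindex (@cons_cover k)) /=; last exact: onW_bij (cons_cover_bij k).
pose cover_of f G : nat := infil_cover ys [tuple of c :: w] (cons_cover (f, G)).
rewrite (eq_bigr (fun fG => cover_of fG.1 fG.2)) => [|[] //].
rewrite -(pair_bigA _ cover_of) [RHS]big_mkcond /=.
apply: eq_bigr => f _; under eq_bigr do rewrite /cover_of infil_cover_cons.
by case: (_ && _); rewrite ?big1_eq // infilE.
Qed.

Lemma prod_wbinom_cons ys a x :
  \prod_j wbinom (a :: x) (ys j) =
  \sum_(f : {ffun 'I_t -> bool} | [forall j, f j ==> (ohead (ys j) == Some a)])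
     \prod_j wbinom x (peel ys f j).
Proof.
have split_head y : wbinom (a :: x) y =
    \sum_(b : bool) (if b then (ohead y == Some a) * wbinom x (behead y) else wbinom x y).
  by rewrite big_bool /= addnC; case: y => [|b y] //=; case: a; case: b.
rewrite (eq_bigr _ (fun j _ => split_head (ys j))) bigA_distr_bigA [RHS]big_mkcond /=.
apply: eq_bigr => f _; rewrite /peel.
have [compat|/forallPn[j]] := boolP [forall j, f j ==> (ohead (ys j) == Some a)].
  by apply: eq_bigr => j _; move: (forallP compat j); case: (f j) => //= ->; rewrite mul1n.
by rewrite negb_imply => /andP[fj /negbTE bad]; rewrite (bigD1 j) //= fj bad.
Qed.

Lemma sum_infil_wbinom_cons ys a x (N := (size x).+1) :
  \sum_(k < N.+1) \sum_(w : k.-tuple bool) infil ys w * wbinom (a :: x) w =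
  \sum_(k < N) \sum_(w : k.-tuple bool) infil ys w * wbinom x w +
  \sum_(f : {ffun 'I_t -> bool} |
          [exists j, f j] && [forall j, f j ==> (ohead (ys j) == Some a)])
     \sum_(k < N) \sum_(w : k.-tuple bool) infil (peel ys f) w * wbinom x w.
Proof.
under eq_bigr do under eq_bigr do rewrite /= mulnDr.
under eq_bigr do rewrite big_split /=.
rewrite big_split /=; congr addn.
  rewrite big_ord_recr /= [X in _ + X]big1 ?addn0 // => w _.
  by rewrite wbinom_small ?muln0 // size_tuple.
have head_a k : \sum_(w : k.+1.-tuple bool) infil ys w *
      (if tval w is b :: w' then (a == b) * wbinom x w' else 0) =
    \sum_(w : k.-tuple bool) infil ys [tuple of a :: w] * wbinom x w.
  rewrite big_tuple_cons (bigD1 a) //= [X in _ + X]big1 ?addn0.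
    by apply: eq_bigr => w _; rewrite eqxx mul1n.
  by move=> b; rewrite eq_sym => /negbTE ab; rewrite big1 // => w _; rewrite ab muln0.
rewrite big_ord_recl big_tuple0 /= muln0 add0n.
rewrite (eq_bigr _ (fun (k : 'I_N) _ => head_a k)).
under eq_bigr do under eq_bigr do rewrite infil_cons big_distrl /=.
by under eq_bigr do rewrite exchange_big /=; rewrite exchange_big.
Qed.

Lemma prod_wbinom_infil ys x :
  \prod_j wbinom x (ys j) =
  \sum_(k < (size x).+1) \sum_(w : k.-tuple bool) infil ys w * wbinom x w.
Proof.
elim: x ys => [|a x IH] ys.
  rewrite big_ord1 big_tuple0 muln1 infil_nil -(big_andE xpredT).
  by elim/big_rec2: _ => // j m b _ ->; rewrite mulnb.
rewrite prod_wbinom_cons (bigD1 [ffun=> false]) /=; last by apply/forallP => j; rewrite ffunE.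
rewrite sum_infil_wbinom_cons; congr addn.
  by under eq_bigr do rewrite /peel ffunE; apply: IH.
have nonzero (f : {ffun 'I_t -> bool}) : (f != [ffun=> false]) = [exists j, f j].
  apply/idP/idP => [|/existsP[j fj]]; last by apply/eqP => f0; rewrite f0 ffunE in fj.
  by apply: contraR => /existsPn none; apply/eqP/ffunP => j; rewrite ffunE; apply/negbTE.
by apply: eq_big => [f | f _]; [rewrite andbC nonzero | apply: IH].
Qed.

End Infiltration.

Lemma sum_prod_wbinom n t (ys : 'I_t -> seq bool) :
  \sum_(x : n.-tuple bool) \prod_j wbinom x (ys j) =
  \sum_(k < n.+1) 2 ^ (n - k) * 'C(n, k) * \sum_(w : k.-tuple bool) infil ys w.
Proof.
under eq_bigr do rewrite prod_wbinom_infil size_tuple.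
rewrite exchange_big; apply: eq_bigr => k _.
rewrite exchange_big big_distrr; apply: eq_bigr => w _.
by rewrite -big_distrr sum_wbinom size_tuple card_bool /= mulnC [2 ^ _ * _]mulnC.
Qed.

Lemma sum_prod_wbinom_tnth n t (ys : 'I_t -> seq bool) (i : 'I_n) :
  \sum_(x : n.-tuple bool | tnth x i) \prod_j wbinom x (ys j) =
  \sum_(k < n.+1) 2 ^ (n.-1 - k) * 'C(n.-1, k) * \sum_(w : k.-tuple bool) infil ys w +
  \sum_(k < n.+1) \sum_(j < k) 2 ^ (n - k) * 'C(i, j) * 'C(n - i.+1, k - j.+1) *
      \sum_(w : k.-tuple bool | nth false w j) infil ys w.
Proof.
under eq_bigr do rewrite prod_wbinom_infil size_tuple.
rewrite exchange_big -big_split; apply: eq_bigr => k _.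
rewrite exchange_big.
under eq_bigr => w _ do rewrite -big_distrr -(eq_bigl _ _ (fun x => eqb_id (tnth x i))).
under eq_bigr => w _ do rewrite sum_wbinom_tnth size_tuple card_bool /= mulnDr big_distrr.
rewrite big_split; congr addn.
  by rewrite big_distrr; apply: eq_bigr => w _; rewrite mulnC [2 ^ _ * _]mulnC.
rewrite exchange_big; apply: eq_bigr => j _; rewrite big_distrr [RHS]big_mkcond.
apply: eq_bigr => w _; rewrite eqb_id (set_nth_default false) ?size_tuple //.
by case: (nth false w j); rewrite /= ?mul1n ?muln0 //; ring.
Qed.

Local Open Scope ring_scope.

Lemma prod_if_bool (R : comPzRingType) (p q : R) (m : seq bool) :
  \prod_(b <- m) (if b then p else q) = p ^+ count id m * q ^+ (size m - count id m).
Proof.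
elim: m => [|b m IH]; first by rewrite big_nil mulr1.
rewrite big_cons IH /=; case: b => /=; first by rewrite subSS exprS mulrA.
by rewrite add0n subSn ?count_size // exprS mulrCA.
Qed.

Lemma del_prob_wbinom (R : comPzRingType) (d : R) x y :
  del_prob d x y = (wbinom x y)%:R * ((1 - d) ^+ size y * d ^+ (size x - size y)).
Proof.
rewrite /del_prob (eq_bigr (fun _ => (1 - d) ^+ size y * d ^+ (size x - size y))).
  by rewrite sumr_const wbinom_mask mulr_natl.
by move=> m /eqP <-; rewrite prod_if_bool size_mask ?size_tuple.
Qed.

Lemma posteriorE (R : fieldType) (d : R) n t (ys : 'I_t -> seq bool) (i : 'I_n) :
  traces_prob d n ys != 0 ->
  posterior d ys i =
  (\sum_(x : n.-tuple bool | tnth x i) \prod_j wbinom x (ys j))%:R /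
  (\sum_(x : n.-tuple bool) \prod_j wbinom x (ys j))%:R.
Proof.
pose c := (2 ^+ n)^-1 * \prod_(j < t) ((1 - d) ^+ size (ys j) * d ^+ (n - size (ys j))).
have joint (x : n.-tuple bool) : joint_prob d ys x = c * (\prod_j wbinom x (ys j))%:R.
  rewrite /joint_prob natr_prod -mulrA -big_split /=; congr (_ * _).
  by apply: eq_bigr => j _; rewrite del_prob_wbinom size_tuple mulrC.
have sum_joint (P : pred (n.-tuple bool)) :
    \sum_(x | P x) joint_prob d ys x = c * (\sum_(x | P x) \prod_j wbinom x (ys j))%:R.
  by rewrite natr_sum mulr_sumr; apply: eq_bigr => x _; rewrite joint.
rewrite /posterior /bit_traces_prob /traces_prob !sum_joint => cD_neq0.
by rewrite -mulf_div divff ?mul1r //; apply: contraNneq cD_neq0 => ->; rewrite mul0r.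
Qed.

Lemma natr_halve_exp2_bin (R : numFieldType) n k : (0 < n)%N ->
  (2 ^ (n.-1 - k) * 'C(n.-1, k))%:R = 2 ^+ (n - k) / 2 * ('C(n.-1, k))%:R :> R.
Proof.
move=> n_gt0; have [lt_kn|le_nk] := ltnP k n.
  rewrite natrM natrX (_ : n - k = (n.-1 - k).+1)%N; last by lia.
  by rewrite exprS [2 * _]mulrC mulfK ?pnatr_eq0.
by rewrite bin_small ?muln0 ?mulr0 //; lia.
Qed.

(* The paper's 1-based index i is (val i).+1, and its w_j is nth false w j.-1. *)
Theorem theorem7 (R : realFieldType) (d : R) (hd0 : 0 <= d) (hd1 : d <= 1)
  (n t : nat) (ys : 'I_t -> seq bool)
  (hpos : 0 < traces_prob d n ys) (i : 'I_n) :
  posterior d ys i =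
    ( \sum_(0 <= k < n.+1)
        (2 ^+ (n - k) / 2) * ('C(n.-1, k))%:R *
        (\sum_(w : k.-tuple bool) (infil ys w)%:R)
    + \sum_(0 <= k < n.+1) \sum_(1 <= j < k.+1)
        2 ^+ (n - k) * ('C(val i, j.-1))%:R * ('C(n - (val i).+1, k - j))%:R *
        (\sum_(w : k.-tuple bool | nth false w j.-1) (infil ys w)%:R) )
    / ( \sum_(0 <= k < n.+1)
        2 ^+ (n - k) * ('C(n, k))%:R *
        (\sum_(w : k.-tuple bool) (infil ys w)%:R) ).
Proof.
rewrite posteriorE ?lt0r_neq0 // sum_prod_wbinom_tnth sum_prod_wbinom.
rewrite natrD !natr_sum !big_mkord.
congr ((_ + _) / _); apply: eq_bigr => k _.
- by rewrite natrM natr_halve_exp2_bin ?natr_sum //; apply: leq_ltn_trans (ltn_ord i).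
- rewrite natr_sum big_add1 big_mkord; apply: eq_bigr => j _.
  by rewrite !natrM natrX natr_sum.
- by rewrite !natrM natrX natr_sum.
Qed.
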